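(* Let $K=\mathbb{Z}[v^{\pm1}]$, $q=v^2$, $m\ge1$. The element $b_1:=\sum_{\epsilon\in\{\pm\}^m}I_\epsilon C_\epsilon\overline{\gamma}\in\mathcal{H}_q(\Sigma_{2m})$ is bar-invariant, i.e. $\overline{b_1}=b_1$.
   Context: $\mathcal{H}_q(\Sigma_{2m})$ is the $K$-algebra generated by $T_1,\dots,T_{2m-1}$ with type A braid relations and $T_i^2=(q-1)T_i+q$. $I_w:=v^{-\ell(w)}T_w$, $I_i:=I_{s_i}$. The bar involution is the ring involution with $v\mapsto v^{-1}$ and $I_w\mapsto I_{w^{-1}}^{-1}$. $I_{a\to b}:=I_aI_{a-1}\cdots I_b$ ($a>b$), $I_a$ ($a=b$), $I_aI_{a+1}\cdots I_b$ ($a<b$); $I^+_{a\to b}=I_{a\to b}$, $I^-_{a\to b}=I_{b\to a}^{-1}$. For $\epsilon=(\epsilon_1,\dots,\epsilon_m)\in\{\pm\}^m$: $I_\epsilon:=I^{\epsilon_1}_{m\to2m-1}I^{\epsilon_2}_{m-1\to2m-2}\cdots I^{\epsilon_m}_{1\to m}$ and $C_\epsilon:=\prod_{i:\epsilon_i=-}c_{m,m-i}$, where $c_{m,0}=1$, $c_{m,i}=I_{m+i\to m+1}I_{m+1\to m+i}$ ($i\ge1$). $\gamma:=\pi_m(I_{w_0^{(m)}})$ where $w_0^{(m)}$ is the longest element of $\Sigma_m$ and $\pi_m$ shifts $T_i\mapsto T_{i+m}$. (In the paper $b_1=v^{-m(2m-1)}H_1\overline{\gamma}$, where $H_1$ is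 the extra generator of the Hu algebra.) *)

From HB Require Import structures.
From mathcomp Require Import all_boot all_order all_algebra.
Set Implicit Arguments. Unset Strict Implicit. Unset Printing Implicit Defensive.
Import GRing.Theory.
Local Open Scope ring_scope.

(* The Iwahori-Hecke algebra H_q(Sigma_n) over K = Z[v, v^-1] is presented by
   generators T_1 .. T_{n-1}.  A K-algebra is the same as a ring A together
   with a central unit v (the image of v in A).  [hecke_relations v T n] says
   that T_1, ..., T_{n-1} in A satisfy the type A braid relations and the
   quadratic relation T_i^2 = (q-1) T_i + q with q = v^2. *)
Definition hecke_relations (A : unitRingType) (v : A) (T : nat -> A) (n : nat)
  : Prop :=
  [/\ (forall x : A, v * x = x * v),
      v \is a GRing.unit,
      (forall i : nat, (1 <= i < n)%N -> T i ^+ 2 = (v ^+ 2 - 1) * T i + v ^+ 2),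
      (forall i : nat, (1 <= i)%N -> (i.+1 < n)%N ->
          T i * T i.+1 * T i = T i.+1 * T i * T i.+1)
    & (forall i j : nat, (1 <= i < n)%N -> (1 <= j < n)%N -> (i.+1 < j)%N ->
          T i * T j = T j * T i)].

(* I_i := v^{-1} T_i  (= I_{s_i} = v^{-l(s_i)} T_{s_i}) *)
Definition Hgen (A : unitRingType) (v : A) (T : nat -> A) (i : nat) : A :=
  v^-1 * T i.

Definition arrow_seq (a b : nat) : seq nat :=
  if (b <= a)%N then rev (iota b (a - b).+1) else iota a (b - a).+1.

Definition Iarrow (A : unitRingType) (v : A) (T : nat -> A) (a b : nat) : A :=
  \prod_(k <- arrow_seq a b) Hgen v T k.

(* I^+_{a -> b} = I_{a -> b},  I^-_{a -> b} = (I_{b -> a})^{-1};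
   the sign + is encoded by true, - by false. *)
Definition Ipm (A : unitRingType) (v : A) (T : nat -> A) (e : bool) (a b : nat)
  : A :=
  if e then Iarrow v T a b else (Iarrow v T b a)^-1.

(* I_eps = I^{eps_1}_{m -> 2m-1} I^{eps_2}_{m-1 -> 2m-2} ... I^{eps_m}_{1 -> m};
   the index k : 'I_m stands for eps_{k+1}. *)
Definition Ieps (A : unitRingType) (v : A) (T : nat -> A) (m : nat)
  (e : {ffun 'I_m -> bool}) : A :=
  \prod_(k < m) Ipm v T (e k) (m - k) (2 * m - 1 - k).

Definition cJM (A : unitRingType) (v : A) (T : nat -> A) (m i : nat) : A :=
  if i == 0%N then 1 else Iarrow v T (m + i) (m + 1) * Iarrow v T (m + 1) (m + i).

(* C_eps = prod_{i : eps_i = -} c_{m, m-i}  (i = k+1, increasing order) *)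
Definition Ceps (A : unitRingType) (v : A) (T : nat -> A) (m : nat)
  (e : {ffun 'I_m -> bool}) : A :=
  \prod_(k < m | ~~ e k) cJM v T m (m - k.+1).

(* gamma = pi_m(I_{w_0^{(m)}}), computed from the reduced word
   w_0 = (s_1)(s_2 s_1)...(s_{m-1} ... s_1) of the longest element of Sigma_m,
   so I_{w_0} = I_{1->1} I_{2->1} ... I_{m-1 -> 1}, shifted by m. *)
Definition gammaH (A : unitRingType) (v : A) (T : nat -> A) (m : nat) : A :=
  \prod_(1 <= j < m) Iarrow v T (m + j) (m + 1).

Definition b1 (A : unitRingType) (v : A) (T : nat -> A) (m : nat)
  (bar : A -> A) : A :=
  \sum_(e : {ffun 'I_m -> bool}) Ieps v T e * Ceps v T e * bar (gammaH v T m).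

From HB Require Import structures.
From mathcomp Require Import all_boot all_order all_algebra.
From mathcomp Require Import zify.
Import GRing.Theory.
Local Open Scope ring_scope.

Set Implicit Arguments.
Unset Strict Implicit.
Unset Printing Implicit Defensive.

(* bar(I_eps) = I_(-eps), because bar inverts every I_i and hence reverses
   words, so eps |-> -eps reindexes the sum and it remains to show
   bar(C_eps) gamma = C_(-eps) bar(gamma).  The elements c_(m,j), shifted
   Jucys-Murphy elements I_(m+j -> m+1) I_(m+1 -> m+j), commute pairwise and
   satisfy bar(c_(m,j)) = c_(m,j)^-1.  Writing gamma as the staircase
   I_(m+1 -> m+1) I_(m+2 -> m+1) ... I_(m+m-1 -> m+1), each step equals
   c_(m,j) bar(I_(m+j -> m+1)) and c_(m,j) commutes with the earlier steps, so
   gamma = c_(m,m-1) ... c_(m,1) bar(gamma).  Therefore bar(C_eps) gamma is the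
   product of the c_(m,j) over the positive signs of eps times bar(gamma),
   which is C_(-eps) bar(gamma). *)

Definition prod_up {R : pzRingType} (g : nat -> R) (a k : nat) : R :=
  \prod_(i <- iota a k) g i.
Definition prod_down {R : pzRingType} (g : nat -> R) (a k : nat) : R :=
  \prod_(i <- rev (iota a k)) g i.

Section BraidShift.

Variables (R : pzRingType) (g : nat -> R) (n : nat).
Hypothesis braid_g : forall i, (0 < i)%N -> (i.+1 < n)%N ->
  g i * g i.+1 * g i = g i.+1 * g i * g i.+1.
Hypothesis comm_g : forall i j, (0 < i)%N -> (j < n)%N -> (i.+1 < j)%N ->
  GRing.comm (g i) (g j).

Lemma commr_prod_in x (s : seq nat) :
  {in s, forall i, GRing.comm x (g i)} -> GRing.comm x (\prod_(i <- s) g i).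
Proof. by move=> xs; rewrite big_seq; apply: commr_prod. Qed.

Lemma prod_up_shift a k l :
  (0 < a)%N -> (a + k <= n)%N -> (a <= l)%N -> (l.+1 < a + k)%N ->
  prod_up g a k * g l = g l.+1 * prod_up g a k.
Proof.
elim: k a => [|k IHk] a a_gt0 ak_le al_le lk_lt; first by lia.
rewrite /prod_up /= big_cons -/(prod_up g a.+1 k).
have [a_lt_l | l_le_a] := ltnP a l.
  rewrite -mulrA IHk; try lia.
  by rewrite !mulrA [g a * _]comm_g //; lia.
have -> : a = l by lia.
case: k IHk ak_le lk_lt => [|k] _ ak_le lk_lt; first by lia.
rewrite /prod_up /= big_cons -/(prod_up g l.+2 k).
have far : GRing.comm (g l) (prod_up g l.+2 k).
  by apply: commr_prod_in => i; rewrite mem_iota => ?; apply: comm_g; lia.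
by rewrite -!mulrA -far !mulrA braid_g //; lia.
Qed.

End BraidShift.

Lemma prodrV_mul_prod (R : unitRingType) (I : Type) (r : seq I) (P : pred I) (F : I -> R) :
  (forall i j, GRing.comm (F i) (F j)) -> (forall i, F i \is a GRing.unit) ->
  \prod_(i <- r | P i) (F i)^-1 * \prod_(i <- r) F i = \prod_(i <- r | ~~ P i) F i.
Proof.
move=> F_comm F_unit; elim: r => [|x r IHr]; first by rewrite !big_nil mulr1.
have x_comm : GRing.comm (F x) (\prod_(i <- r | P i) (F i)^-1).
  by apply: commr_prod => i _; apply: commrV.
rewrite !big_cons; case: (P x) => /=.
  by rewrite -mulrA [_ * (F x * _)]mulrA -x_comm -mulrA mulKr ?IHr.
by rewrite mulrA -x_comm -mulrA IHr.
Qed.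

Lemma commr_rmorph_inv (R : unitRingType) (bar : {rmorphism R -> R}) x y :
  x \is a GRing.unit -> bar x = x^-1 -> GRing.comm x y -> GRing.comm x (bar y).
Proof.
move=> x_unit bar_x xy.
have : GRing.comm (bar x) (bar y) by rewrite /GRing.comm -!rmorphM xy.
by rewrite bar_x => /commr_sym/commrV; rewrite invrK.
Qed.

Definition jucys_murphy {R : pzRingType} (g : nat -> R) (a k : nat) : R :=
  prod_down g a k * prod_up g a k.

Definition staircase {R : pzRingType} (g : nat -> R) (a k : nat) : R :=
  \prod_(j < k) prod_down g a j.

Definition jucys_murphy_prod {R : pzRingType} (g : nat -> R) (a k : nat) : R :=
  \prod_(j < k) jucys_murphy g a (k - j.+1).

Section BarInvolution.

Variables (R : unitRingType) (g : nat -> R) (n : nat) (bar : {rmorphism R -> R}).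
Hypothesis braid_g : forall i, (0 < i)%N -> (i.+1 < n)%N ->
  g i * g i.+1 * g i = g i.+1 * g i * g i.+1.
Hypothesis comm_g : forall i j, (0 < i)%N -> (j < n)%N -> (i.+1 < j)%N ->
  GRing.comm (g i) (g j).
Hypothesis g_unit : forall i, (0 < i < n)%N -> g i \is a GRing.unit.
Hypothesis bar_g : forall i, (0 < i < n)%N -> bar (g i) = (g i)^-1.

(* Descending products are ascending products in the converse ring, where the
   braid relations still hold because both of their sides are palindromes. *)
Lemma prod_down_shift a k l :
  (0 < a)%N -> (a + k <= n)%N -> (a <= l)%N -> (l.+1 < a + k)%N ->
  prod_down g a k * g l.+1 = g l * prod_down g a k.
Proof.
pose gc : nat -> R^c := g.
have braid_gc i : (0 < i)%N -> (i.+1 < n)%N ->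
    gc i * gc i.+1 * gc i = gc i.+1 * gc i * gc i.+1.
  by move=> *; rewrite -!mulrA; apply: braid_g.
have comm_gc i j : (0 < i)%N -> (j < n)%N -> (i.+1 < j)%N -> GRing.comm (gc i) (gc j).
  by move=> *; apply/esym/comm_g.
move=> *; have := prod_up_shift braid_gc comm_gc (a := a) (k := k) (l := l).
by rewrite /prod_up rev_prodr => shift; apply/esym/shift.
Qed.

Lemma prod_g_unit (s : seq nat) :
  {in s, forall i, (0 < i < n)%N} -> \prod_(i <- s) g i \is a GRing.unit.
Proof. by move=> s_in; apply: unitr_prod_in => i /s_in/g_unit. Qed.

Lemma bar_prod_g (s : seq nat) :
  {in s, forall i, (0 < i < n)%N} ->
  bar (\prod_(i <- s) g i) = (\prod_(i <- rev s) g i)^-1.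
Proof.
elim: s => [|i s IHs] s_in; first by rewrite !big_nil rmorph1 invr1.
have s'_in : {in s, forall j, (0 < j < n)%N}.
  by move=> j j_s; apply: s_in; rewrite inE j_s orbT.
have i_in : (0 < i < n)%N by apply: s_in; rewrite inE eqxx.
rewrite big_cons rmorphM IHs // rev_cons big_rcons invrM ?bar_g ?g_unit //.
by apply: prod_g_unit => j; rewrite mem_rev; apply: s'_in.
Qed.

Lemma iota_in a k : (0 < a)%N -> (a + k <= n)%N ->
  {in iota a k, forall i, (0 < i < n)%N}.
Proof. by move=> a_gt0 ak_le i; rewrite mem_iota; lia. Qed.

Lemma rev_iota_in a k : (0 < a)%N -> (a + k <= n)%N ->
  {in rev (iota a k), forall i, (0 < i < n)%N}.
Proof. by move=> a_gt0 ak_le i; rewrite mem_rev mem_iota; lia. Qed.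

Lemma bar_prod_up a k : (0 < a)%N -> (a + k <= n)%N ->
  bar (prod_up g a k) = (prod_down g a k)^-1.
Proof. by move=> a_gt0 ak_le; rewrite /prod_up bar_prod_g //; exact: (iota_in a_gt0 ak_le). Qed.

Lemma bar_prod_down a k : (0 < a)%N -> (a + k <= n)%N ->
  bar (prod_down g a k) = (prod_up g a k)^-1.
Proof.
by move=> a_gt0 ak_le; rewrite /prod_down bar_prod_g ?revK //; exact: (rev_iota_in a_gt0 ak_le).
Qed.

Lemma prod_up_unit a k : (0 < a)%N -> (a + k <= n)%N -> prod_up g a k \is a GRing.unit.
Proof. by move=> a_gt0 ak_le; exact/prod_g_unit/(iota_in a_gt0 ak_le). Qed.

Lemma prod_down_unit a k : (0 < a)%N -> (a + k <= n)%N -> prod_down g a k \is a GRing.unit.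
Proof. by move=> a_gt0 ak_le; exact/prod_g_unit/(rev_iota_in a_gt0 ak_le). Qed.

Lemma jucys_murphy_unit a k : (0 < a)%N -> (a + k <= n)%N ->
  jucys_murphy g a k \is a GRing.unit.
Proof. by move=> *; rewrite unitrMl ?prod_up_unit ?prod_down_unit. Qed.

Lemma bar_jucys_murphy a k : (0 < a)%N -> (a + k <= n)%N ->
  bar (jucys_murphy g a k) = (jucys_murphy g a k)^-1.
Proof.
by move=> *; rewrite rmorphM bar_prod_up ?bar_prod_down // invrM ?prod_up_unit ?prod_down_unit.
Qed.

Lemma jucys_murphy_comm_g a k i :
  (0 < a)%N -> (a + k <= n)%N -> (a <= i)%N -> (i.+1 < a + k)%N ->
  GRing.comm (jucys_murphy g a k) (g i).
Proof.
move=> *; rewrite /GRing.comm /jucys_murphy -mulrA (prod_up_shift braid_g comm_g) //.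
by rewrite mulrA prod_down_shift // mulrA.
Qed.

Lemma jucys_murphy_comm_prod_up a k j : (0 < a)%N -> (a + k <= n)%N -> (j < k)%N ->
  GRing.comm (jucys_murphy g a k) (prod_up g a j).
Proof.
by move=> *; apply: commr_prod_in => i; rewrite mem_iota => ?; apply: jucys_murphy_comm_g; lia.
Qed.

Lemma jucys_murphy_comm_prod_down a k j : (0 < a)%N -> (a + k <= n)%N -> (j < k)%N ->
  GRing.comm (jucys_murphy g a k) (prod_down g a j).
Proof.
move=> *; apply: commr_prod_in => i; rewrite mem_rev mem_iota => ?.
by apply: jucys_murphy_comm_g; lia.
Qed.

Lemma jucys_murphy_comm a j k : (0 < a)%N -> (a + j <= n)%N -> (a + k <= n)%N ->
  GRing.comm (jucys_murphy g a j) (jucys_murphy g a k).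
Proof.
have comm_lt i l : (0 < a)%N -> (a + l <= n)%N -> (i < l)%N ->
    GRing.comm (jucys_murphy g a l) (jucys_murphy g a i).
  move=> *; apply: commrM.
    exact: jucys_murphy_comm_prod_down.
  exact: jucys_murphy_comm_prod_up.
move=> a_gt0 aj_le ak_le; case: (ltngtP j k) => [jk | kj | ->].
- exact/commr_sym/comm_lt.
- exact: comm_lt.
- exact: commr_refl.
Qed.

Lemma staircase_bar a k : (0 < a)%N -> (a + k <= n.+1)%N ->
  staircase g a k = jucys_murphy_prod g a k * bar (staircase g a k).
Proof.
move=> a_gt0; elim: k => [|k IHk] ak_le.
  by rewrite /staircase /jucys_murphy_prod !big_ord0 rmorph1 mulr1.
have ak_le' : (a + k <= n)%N by lia.
set J := jucys_murphy g a k.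
have J_prod : GRing.comm J (jucys_murphy_prod g a k).
  by apply: commr_prod => j _; apply: jucys_murphy_comm => //; lia.
have J_stair : GRing.comm J (bar (staircase g a k)).
  apply: commr_rmorph_inv; [exact: jucys_murphy_unit | exact: bar_jucys_murphy |].
  by apply: commr_prod => j _; apply: jucys_murphy_comm_prod_down.
have down_k : prod_down g a k = J * bar (prod_down g a k).
  by rewrite bar_prod_down // mulrK // prod_up_unit.
rewrite /staircase big_ord_recr /= -/(staircase g a k) rmorphM.
rewrite /jucys_murphy_prod big_ord_recl subn1 /=.
under eq_bigr => i _ do rewrite /bump leq0n add1n subSS.
rewrite -/(jucys_murphy_prod g a k) -/J {1}IHk 1?ltnW // {1}down_k.
clearbody J.
by rewrite !mulrA -(mulrA _ _ J) -J_stair mulrA -J_prod.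
Qed.

End BarInvolution.

Lemma mulr_central_mid (R : pzRingType) (w : R) :
  (forall z, GRing.comm w z) -> forall u x y, u * x * (w * y) = u * w * (x * y).
Proof. by move=> w_central u x y; rewrite -!mulrA (mulrA x) -w_central -mulrA. Qed.

Section HeckeGenerators.

Variables (A : unitRingType) (v : A) (T : nat -> A) (n : nat).
Hypothesis hecke : hecke_relations v T n.

Let vV_central x : GRing.comm v^-1 x.
Proof. by case: hecke => v_central *; apply/commr_sym/commrV/esym/v_central. Qed.

Lemma Hgen_braid i : (0 < i)%N -> (i.+1 < n)%N ->
  Hgen v T i * Hgen v T i.+1 * Hgen v T i = Hgen v T i.+1 * Hgen v T i * Hgen v T i.+1.
Proof.
have scale3 x y z :
    v^-1 * x * (v^-1 * y) * (v^-1 * z) = v^-1 * v^-1 * v^-1 * (x * y * z).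
  rewrite (mulr_central_mid vV_central v^-1).
  by rewrite (mulr_central_mid vV_central (v^-1 * v^-1)).
by case: hecke => _ _ _ T_braid _ *; rewrite /Hgen !scale3 T_braid.
Qed.

Lemma Hgen_comm i j : (0 < i)%N -> (j < n)%N -> (i.+1 < j)%N ->
  GRing.comm (Hgen v T i) (Hgen v T j).
Proof.
case: hecke => _ _ _ _ T_comm *.
rewrite /GRing.comm /Hgen !(mulr_central_mid vV_central v^-1).
by rewrite T_comm //; lia.
Qed.

(* The quadratic relation gives T_i^-1 = q^-1 (T_i - (q - 1)). *)
Lemma Hgen_unit i : (0 < i < n)%N -> Hgen v T i \is a GRing.unit.
Proof.
case: hecke => v_central v_unit T_quad _ _ i_in.
have q_unit : v ^+ 2 \is a GRing.unit by rewrite unitrX.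
have qV_central x : GRing.comm (v ^+ 2)^-1 x.
  by apply/commr_sym/commrV/commrX/esym/v_central.
have T_q1 : GRing.comm (T i) (v ^+ 2 - 1).
  by apply/commrB/commr1/commrX/esym/v_central.
have T_unit : T i \is a GRing.unit.
  apply/unitrP; exists ((v ^+ 2)^-1 * (T i - (v ^+ 2 - 1))); split.
    by rewrite -mulrA mulrBl -expr2 T_quad // addrAC subrr add0r mulVr.
  rewrite mulrA -qV_central -mulrA mulrBr -expr2 T_q1 T_quad //.
  by rewrite addrAC subrr add0r mulVr.
by rewrite /Hgen unitrMl // unitrV.
Qed.

End HeckeGenerators.

Lemma arrow_seq_up a b : (a <= b)%N -> arrow_seq a b = iota a (b - a).+1.
Proof.
move=> ab; rewrite /arrow_seq; case: ifP => // ba.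
have -> : b = a by lia.
by rewrite subnn.
Qed.

Lemma arrow_seq_down a b : (b <= a)%N -> arrow_seq a b = rev (iota b (a - b).+1).
Proof. by move=> ba; rewrite /arrow_seq ba. Qed.

Lemma arrow_seq_rev a b : arrow_seq b a = rev (arrow_seq a b).
Proof.
case: (leqP a b) => [ab | /ltnW ba]; first by rewrite (arrow_seq_up ab) (arrow_seq_down ab).
by rewrite (arrow_seq_up ba) (arrow_seq_down ba) revK.
Qed.

Lemma arrow_seq_in n a b : (0 < a < n)%N -> (0 < b < n)%N ->
  {in arrow_seq a b, forall k, (0 < k < n)%N}.
Proof.
move=> a_in b_in k; rewrite /arrow_seq.
by case: ifP => _; rewrite ?mem_rev mem_iota; lia.
Qed.

Lemma Iarrow_prod_up (A : unitRingType) (v : A) (T : nat -> A) a j :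
  (0 < j)%N -> Iarrow v T a.+1 (a + j) = prod_up (Hgen v T) a.+1 j.
Proof.
move=> j_gt0; rewrite /Iarrow arrow_seq_up; last by lia.
by have -> : (a + j - a.+1).+1 = j by lia.
Qed.

Lemma Iarrow_prod_down (A : unitRingType) (v : A) (T : nat -> A) a j :
  (0 < j)%N -> Iarrow v T (a + j) a.+1 = prod_down (Hgen v T) a.+1 j.
Proof.
move=> j_gt0; rewrite /Iarrow arrow_seq_down; last by lia.
by have -> : (a + j - a.+1).+1 = j by lia.
Qed.

Section HeckeBar.

Variables (A : unitRingType) (v : A) (T : nat -> A) (n : nat) (bar : {rmorphism A -> A}).
Hypothesis hecke : hecke_relations v T n.
Hypothesis bar_Hgen : forall i, (0 < i < n)%N -> bar (Hgen v T i) = (Hgen v T i)^-1.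

Lemma Iarrow_unit a b : (0 < a < n)%N -> (0 < b < n)%N ->
  Iarrow v T a b \is a GRing.unit.
Proof.
by move=> a_in b_in; exact/(prod_g_unit (Hgen_unit hecke))/(arrow_seq_in a_in b_in).
Qed.

Lemma bar_Iarrow a b : (0 < a < n)%N -> (0 < b < n)%N ->
  bar (Iarrow v T a b) = (Iarrow v T b a)^-1.
Proof.
move=> a_in b_in; rewrite /Iarrow (bar_prod_g (Hgen_unit hecke) bar_Hgen).
  by rewrite -arrow_seq_rev.
exact: arrow_seq_in.
Qed.

Lemma bar_Ipm e a b : (0 < a < n)%N -> (0 < b < n)%N ->
  bar (Ipm v T e a b) = Ipm v T (~~ e) a b.
Proof.
move=> a_in b_in; rewrite /Ipm; case: e => /=; first exact: bar_Iarrow.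
by rewrite rmorphV ?Iarrow_unit // bar_Iarrow // invrK.
Qed.

End HeckeBar.

Lemma cJM_jucys_murphy (A : unitRingType) (v : A) (T : nat -> A) m j :
  cJM v T m j = jucys_murphy (Hgen v T) m.+1 j.
Proof.
rewrite /cJM; case: eqP => [-> | /eqP].
  by rewrite /jucys_murphy /prod_down /prod_up !big_nil mulr1.
by rewrite -lt0n addn1 => j_gt0; rewrite Iarrow_prod_down ?Iarrow_prod_up.
Qed.

Lemma gammaH_staircase (A : unitRingType) (v : A) (T : nat -> A) m :
  gammaH v T m = staircase (Hgen v T) m.+1 m.
Proof.
rewrite /gammaH /staircase -(big_mkord xpredT); case: m => [|m]; first by rewrite !big_geq.
rewrite [RHS]big_nat_recl // [prod_down _ _ 0]/prod_down big_nil mul1r big_add1 /=.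
by apply: eq_bigr => j _; rewrite addn1 Iarrow_prod_down.
Qed.

Definition flip_signs m (e : {ffun 'I_m -> bool}) : {ffun 'I_m -> bool} :=
  [ffun k => ~~ e k].

Lemma flip_signsK m : involutive (@flip_signs m).
Proof. by move=> e; apply/ffunP => k; rewrite !ffunE negbK. Qed.

Section BarInvarianceOfB1.

Variables (A : unitRingType) (v : A) (T : nat -> A) (m : nat) (bar : {rmorphism A -> A}).
Hypothesis hecke : hecke_relations v T (2 * m).
Hypothesis bar_Hgen : forall i, (0 < i < 2 * m)%N -> bar (Hgen v T i) = (Hgen v T i)^-1.

Lemma bar_Ieps (e : {ffun 'I_m -> bool}) : bar (Ieps v T e) = Ieps v T (flip_signs e).
Proof.
rewrite /Ieps rmorph_prod; apply: eq_bigr => k _.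
by rewrite ffunE (bar_Ipm hecke bar_Hgen) //; have := ltn_ord k; lia.
Qed.

Lemma bar_Ceps_mul (e : {ffun 'I_m -> bool}) :
  bar (Ceps v T e) * jucys_murphy_prod (Hgen v T) m.+1 m = Ceps v T (flip_signs e).
Proof.
pose J (k : 'I_m) := jucys_murphy (Hgen v T) m.+1 (m - k.+1).
have J_in (k : 'I_m) : (m.+1 + (m - k.+1) <= 2 * m)%N by have := ltn_ord k; lia.
have J_unit k : J k \is a GRing.unit by apply: (jucys_murphy_unit (Hgen_unit hecke)).
have J_comm k l : GRing.comm (J k) (J l).
  exact: (jucys_murphy_comm (Hgen_braid hecke) (Hgen_comm hecke)).
have bar_J k : bar (J k) = (J k)^-1.
  exact: (bar_jucys_murphy (Hgen_unit hecke) bar_Hgen).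
rewrite /Ceps rmorph_prod (eq_bigr (fun k => (J k)^-1)); last first.
  by move=> k _; rewrite cJM_jucys_murphy bar_J.
rewrite prodrV_mul_prod //.
by apply: eq_big => [k | k _]; rewrite ?ffunE ?cJM_jucys_murphy.
Qed.

Lemma gammaH_bar :
  gammaH v T m = jucys_murphy_prod (Hgen v T) m.+1 m * bar (gammaH v T m).
Proof.
rewrite gammaH_staircase.
apply: (staircase_bar (Hgen_braid hecke) (Hgen_comm hecke) (Hgen_unit hecke) bar_Hgen) => //.
lia.
Qed.

End BarInvarianceOfB1.

Unset Implicit Arguments.

Theorem proposition6p11 (A : unitRingType) (v : A) (T : nat -> A) (m : nat)
    (bar : {rmorphism A -> A}) :
  (1 <= m)%N ->
  hecke_relations v T (2 * m) ->
  bar v = v^-1 ->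
  (forall i : nat, (1 <= i < 2 * m)%N -> bar (Hgen v T i) = (Hgen v T i)^-1) ->
  (forall x : A, bar (bar x) = x) ->
  bar (b1 v T m bar) = b1 v T m bar.
Proof.
move=> _ hecke _ bar_Hgen barK.
rewrite /b1 rmorph_sum [RHS](reindex_inj (can_inj (@flip_signsK m))).
apply: eq_bigr => e _; rewrite !rmorphM barK bar_Ieps // {1}(gammaH_bar hecke bar_Hgen).
by rewrite mulrA -(mulrA _ (bar _)) bar_Ceps_mul.
Qed.
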